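(* If $A\in\mathfrak{B}_{n\times m}$ is a canonical matrix, then $A$ is semi-canonical.
   Context: $\mathfrak{B}_{n\times m}$ denotes the set of all $n\times m$ matrices with entries in $\{0,1\}$. For $A=[a_{ij}]\in\mathfrak{B}_{n\times m}$, $r(A)=\langle x_1,\dots,x_n\rangle$ with $x_i=\sum_{j=1}^m a_{ij}2^{m-j}$ and $c(A)=\langle y_1,\dots,y_m\rangle$ with $y_j=\sum_{i=1}^n a_{ij}2^{n-i}$; tuples are compared lexicographically. $A\sim B$ means $A=XBY$ for some permutation matrices $X$ ($n\times n$) and $Y$ ($m\times m$). $A$ is canonical if $r(A)$ is the lexicographically minimal element of $\{r(B)\mid B\sim A\}$. $A$ is semi-canonical if $x_1\le\cdots\le x_n$ and $y_1\le\cdots\le y_m$. *)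

From mathcomp Require Import all_boot all_order all_algebra all_fingroup.
Set Implicit Arguments. Unset Strict Implicit. Unset Printing Implicit Defensive.
Import Order.TTheory GRing.Theory Num.Theory.
Local Open Scope ring_scope.

Definition binmx (n m : nat) (A : 'M[int]_(n, m)) : Prop :=
  forall i j, A i j = 0 \/ A i j = 1.

(* x_i = sum_j a_ij 2^(m-j) (1-indexed j); with 0-indexed j: 2^(m-1-j). *)
Definition rowval (n m : nat) (A : 'M[int]_(n, m)) (i : 'I_n) : int :=
  \sum_(j < m) A i j * 2 ^+ (m - j.+1)%N.

(* y_j = sum_i a_ij 2^(n-i) (1-indexed i). *)
Definition colval (n m : nat) (A : 'M[int]_(n, m)) (j : 'I_m) : int :=
  \sum_(i < n) A i j * 2 ^+ (n - i.+1)%N.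

Definition rtuple (n m : nat) (A : 'M[int]_(n, m)) : seq int :=
  [seq rowval A i | i <- enum 'I_n].

Definition ctuple (n m : nat) (A : 'M[int]_(n, m)) : seq int :=
  [seq colval A j | j <- enum 'I_m].

Fixpoint lexle (s t : seq int) : bool :=
  match s, t with
  | [::], _ => true
  | _ :: _, [::] => false
  | x :: s', y :: t' => (x < y) || ((x == y) && lexle s' t')
  end.

Definition mxequiv (n m : nat) (A B : 'M[int]_(n, m)) : Prop :=
  exists (X : 'M[int]_n) (Y : 'M[int]_m),
    is_perm_mx X /\ is_perm_mx Y /\ A = X *m B *m Y.

Definition canonical (n m : nat) (A : 'M[int]_(n, m)) : Prop :=
  binmx A /\ forall B : 'M[int]_(n, m), binmx B -> mxequiv B A -> lexle (rtuple A) (rtuple B).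

Definition semi_canonical (n m : nat) (A : 'M[int]_(n, m)) : Prop :=
  (forall i1 i2 : 'I_n, (i1 <= i2)%N -> rowval A i1 <= rowval A i2) /\
  (forall j1 j2 : 'I_m, (j1 <= j2)%N -> colval A j1 <= colval A j2).

(** If two rows of a canonical matrix were out of order, exchanging them would
    give an equivalent matrix with a lexicographically smaller row tuple.  If two
    columns [j1 < j2] had [y_j1 > y_j2], then in the first row [i0] where they
    differ the column [j1] has a [1] and [j2] a [0]; exchanging the two columns
    leaves the rows above [i0] unchanged and strictly decreases [x_i0], again
    contradicting minimality. *)
From mathcomp Require Import all_boot all_order all_algebra all_fingroup.
From mathcomp Require Import zify.
Set Implicit Arguments. Unset Strict Implicit. Unset Printing Implicit Defensive.
Import Order.TTheory GRing.Theory Num.Theory.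

Local Open Scope ring_scope.

Definition binval (h : nat -> int) (n : nat) : int :=
  \sum_(i < n) h i * 2 ^+ (n - i.+1).

Lemma binvalS (h : nat -> int) n : binval h n.+1 = 2 * binval h n + h n.
Proof.
rewrite /binval big_ord_recr /= subnn expr0 mulr1 big_distrr /=.
congr (_ + _); apply: eq_bigr => i _ /=.
have -> : (n.+1 - i.+1 = (n - i.+1).+1)%N by have := ltn_ord i; lia.
by rewrite exprS mulrCA.
Qed.

Section BinaryValue.

Variable f g : nat -> int.
Hypothesis f01 : forall i, f i = 0 \/ f i = 1.
Hypothesis g01 : forall i, g i = 0 \/ g i = 1.

Lemma binval_inj n : binval f n = binval g n -> forall i, (i < n)%N -> f i = g i.
Proof.
elim: n => [|n IHn] // E i.
rewrite !binvalS in E.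
have [Elow Elast] : binval f n = binval g n /\ f n = g n.
  by have := f01 n; have := g01 n; lia.
by rewrite ltnS leq_eqVlt => /predU1P [-> //|]; apply: IHn.
Qed.

Lemma binval_lt_first_diff n : binval g n < binval f n ->
  exists i0, [/\ (i0 < n)%N, forall i, (i < i0)%N -> f i = g i, f i0 = 1 & g i0 = 0].
Proof.
elim: n => [|n IHn]; first by rewrite /binval !big_ord0 ltxx.
rewrite !binvalS => lt_fg.
case: (ltP (binval g n) (binval f n)) => [/IHn [i0 [lt_i0n eq_pre f1 g0]]|le_fg].
  by exists i0; split => //; apply: ltn_trans lt_i0n _.
have [Elow f1 g0] : [/\ binval f n = binval g n, f n = 1 & g n = 0].
  by have := f01 n; have := g01 n; split; lia.
by exists n; split => //; apply: binval_inj.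
Qed.

End BinaryValue.

Lemma lexleN_first_gt (s t : seq int) k : (k < size s)%N -> size s = size t ->
  (forall i, (i < k)%N -> nth 0 s i = nth 0 t i) -> nth 0 t k < nth 0 s k ->
  ~~ lexle s t.
Proof.
elim: s t k => [|x s IHs] [|y t] [|k] //= lt_ks [size_st] eq_pre lt_k.
  by rewrite negb_or (lt_gtF lt_k) (gt_eqF lt_k).
have /= -> := eq_pre 0%N (ltn0Sn _).
rewrite ltxx eqxx /=; apply: (IHs t k) => // i lt_ik.
exact: (eq_pre i.+1).
Qed.

Lemma size_rtuple n m (A : 'M[int]_(n, m)) : size (rtuple A) = n.
Proof. by rewrite size_map size_enum_ord. Qed.

Lemma nth_rtuple n m (A : 'M[int]_(n, m)) (i : 'I_n) : nth 0 (rtuple A) i = rowval A i.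
Proof. by rewrite (nth_map i) ?size_enum_ord // nth_ord_enum. Qed.

Lemma rtupleN_first_gt n m (A B : 'M[int]_(n, m)) (k : 'I_n) :
  (forall i : 'I_n, (i < k)%N -> rowval A i = rowval B i) ->
  rowval B k < rowval A k -> ~~ lexle (rtuple A) (rtuple B).
Proof.
move=> eq_pre lt_k.
apply: (@lexleN_first_gt _ _ k); rewrite ?size_rtuple ?nth_rtuple //.
move=> i lt_ik; have lt_in := ltn_trans lt_ik (ltn_ord k).
by rewrite -[i]/(val (Ordinal lt_in)) !nth_rtuple eq_pre.
Qed.

Lemma rowsum_tperm_lt m (r : 'I_m -> int) (j1 j2 : 'I_m) :
  (j1 < j2)%N -> r j1 = 1 -> r j2 = 0 ->
  \sum_(j < m) r (tperm j1 j2 j) * 2 ^+ (m - j.+1) < \sum_(j < m) r j * 2 ^+ (m - j.+1).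
Proof.
move=> lt_j12 r1 r2.
have ne_j21 : j2 != j1 by rewrite neq_ltn lt_j12 orbT.
have split_sum (F : 'I_m -> int) : \sum_(j < m) F j =
    F j1 + (F j2 + \sum_(j < m | (j != j1) && (j != j2)) F j).
  by rewrite (bigD1 j1) // (bigD1 j2).
rewrite split_sum [X in _ < X]split_sum tpermL tpermR r1 r2 !mul0r !mul1r !add0r.
rewrite (eq_bigr (fun j => r j * 2 ^+ (m - j.+1))); last first.
  by move=> j /andP [ne_j1 ne_j2]; rewrite tpermD // eq_sym.
by rewrite ltrD2r ltr_eXn2l //; have := ltn_ord j2; lia.
Qed.

Lemma binmx_row_perm n m (s : 'S_n) (A : 'M[int]_(n, m)) :
  binmx A -> binmx (row_perm s A).
Proof. by move=> bA i j; rewrite mxE. Qed.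

Lemma binmx_col_perm n m (s : 'S_m) (A : 'M[int]_(n, m)) :
  binmx A -> binmx (col_perm s A).
Proof. by move=> bA i j; rewrite mxE. Qed.

Lemma mxequiv_row_perm n m (s : 'S_n) (A : 'M[int]_(n, m)) : mxequiv (row_perm s A) A.
Proof.
exists (perm_mx s), 1%:M; split; first exact: perm_mx_is_perm.
by split; [exact: is_perm_mx1 | rewrite mulmx1 row_permE].
Qed.

Lemma mxequiv_col_perm n m (s : 'S_m) (A : 'M[int]_(n, m)) : mxequiv (col_perm s A) A.
Proof.
exists 1%:M, (perm_mx s^-1); split; first exact: is_perm_mx1.
by split; [exact: perm_mx_is_perm | rewrite mul1mx col_permE].
Qed.

Section Canonical.

Variables n m : nat.
Variable A : 'M[int]_(n, m).
Hypothesis canA : canonical A.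

Lemma canonical_rowval_mono (i1 i2 : 'I_n) :
  (i1 <= i2)%N -> rowval A i1 <= rowval A i2.
Proof.
move=> le_i12; rewrite leNgt; apply/negP => lt_x21.
have [bA minA] := canA.
pose B := row_perm (tperm i1 i2) A.
have rowvalB i : rowval B i = rowval A (tperm i1 i2 i).
  by apply: eq_bigr => j _; rewrite mxE.
apply/negP: (minA B (binmx_row_perm _ bA) (mxequiv_row_perm _ _)).
apply: (@rtupleN_first_gt _ _ _ _ i1); last by rewrite rowvalB tpermL.
move=> i lt_i1; rewrite rowvalB tpermD // neq_ltn ?lt_i1 ?(leq_trans lt_i1 le_i12) ?orbT //.
Qed.

Lemma canonical_colval_mono (j1 j2 : 'I_m) :
  (j1 <= j2)%N -> colval A j1 <= colval A j2.
Proof.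
move=> le_j12; rewrite leNgt; apply/negP => lt_y21.
have [bA minA] := canA.
case: n A bA minA lt_y21 => [|n'] A' bA minA lt_y21.
  by rewrite /colval !big_ord0 ltxx in lt_y21.
pose col_bits j : nat -> int := fun i => A' (inord i) j.
have colval_bits j : colval A' j = binval (col_bits j) n'.+1.
  by apply: eq_bigr => i _; rewrite /col_bits inord_val.
rewrite !colval_bits in lt_y21.
have [i0 [lt_i0 eq_pre A1 A0]] := binval_lt_first_diff
  (fun i => bA (inord i) j1) (fun i => bA (inord i) j2) lt_y21.
have lt_j12 : (j1 < j2)%N.
  rewrite ltn_neqAle le_j12 andbT; apply/eqP => /val_inj E.
  by move: A0; rewrite -E A1.
pose B := col_perm (tperm j1 j2) A'.
apply/negP: (minA B (binmx_col_perm _ bA) (mxequiv_col_perm _ _)).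
apply: (@rtupleN_first_gt _ _ _ _ (inord i0)).
  move=> i; rewrite inordK // => lt_ii0.
  have := eq_pre i lt_ii0; rewrite /col_bits inord_val => eq_i.
  apply: eq_bigr => j _; rewrite mxE.
  by case: tpermP => [->|->|] //; rewrite eq_i.
rewrite /rowval; under eq_bigr => j _ do rewrite mxE.
exact: rowsum_tperm_lt.
Qed.

End Canonical.

Theorem corollary2 (n m : nat) (A : 'M[int]_(n, m)) :
  binmx A -> canonical A -> semi_canonical A.
Proof.
move=> _ canA; split.
- exact: canonical_rowval_mono.
- exact: canonical_colval_mono.
Qed.
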